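(* Let $\alpha$ be an infinite ordinal, $V={}^\alpha\alpha^{(Id)}$, and let $\mathfrak B$ be a subalgebra of $\wp(V)=\langle\mathcal P(V);\cap,-,S^i_j,S_{ij}\rangle_{i\neq j<\alpha}$. Then there exist a set $M$, an injection $\epsilon:\alpha\to M$, a subalgebra $\mathfrak C$ of the full set algebra $\langle\mathcal P({}^\alpha M);\cap,-,S^i_j,S_{ij}\rangle_{i\neq j<\alpha}$ and an isomorphism $g:\mathfrak B\to\mathfrak C$ such that $g(X)\cap\{\epsilon\circ s:s\in V\}=\{\epsilon\circ s:s\in X\}$ for every $X\in B$ (i.e. $g$ is a strong sub-base-isomorphism).
   Context: ${}^\alpha\alpha^{(Id)}=\{s\in{}^\alpha\alpha:|\{i<\alpha:s_i\neq i\}|<\omega\}$. For $i\neq j<\alpha$, $[i,j]$ is the transposition swapping $i,j$ and $[i/j]:\alpha\to\alpha$ sends $i$ to $j$ and fixes all other points. For a set $W$ of $\alpha$-sequences closed under $s\mapsto s\circ[i,j]$ and $s\mapsto s\circ[i/j]$, the algebra on $\mathcal P(W)$ has complement relative to $W$, $S^i_j(X)=\{q\in W:q\circ[i/j]\in X\}$ and $S_{ij}(X)=\{q\in W:q\circ[i,j]\in X\}$. *)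

From Stdlib Require Import List Classical ClassicalDescription
  FunctionalExtensionality PropExtensionality.

Definition swap {A : Type} (i j k : A) : A :=
  if excluded_middle_informative (k = i) then j
  else if excluded_middle_informative (k = j) then i else k.

Definition repl {A : Type} (i j k : A) : A :=
  if excluded_middle_informative (k = i) then j else k.

Definition infinite_type (A : Type) : Prop :=
  ~ exists l : list A, forall x, In x l.

(* s differs from the identity in only finitely many places:
   membership in  ^alpha alpha^(Id) *)
Definition fin_supp {A : Type} (s : A -> A) : Prop :=
  exists l : list A, forall i, s i <> i -> In i l.

Definition setI {T : Type} (X Y : T -> Prop) : T -> Prop :=
  fun q => X q /\ Y q.
Definition setCrel {T : Type} (W X : T -> Prop) : T -> Prop :=
  fun q => W q /\ ~ X q.
Definition Srepl {A M : Type} (W : (A -> M) -> Prop) (i j : A)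
  (X : (A -> M) -> Prop) : (A -> M) -> Prop :=
  fun q => W q /\ X (fun k => q (repl i j k)).
Definition Sswap {A M : Type} (W : (A -> M) -> Prop) (i j : A)
  (X : (A -> M) -> Prop) : (A -> M) -> Prop :=
  fun q => W q /\ X (fun k => q (swap i j k)).

Definition subalgebra {A M : Type} (W : (A -> M) -> Prop)
  (B : ((A -> M) -> Prop) -> Prop) : Prop :=
  (forall X, B X -> forall q, X q -> W q) /\
  (forall X Y, B X -> B Y -> B (setI X Y)) /\
  (forall X, B X -> B (setCrel W X)) /\
  (forall i j, i <> j -> forall X, B X -> B (Srepl W i j X)) /\
  (forall i j, i <> j -> forall X, B X -> B (Sswap W i j X)).

Definition is_iso {A M N : Type} (W1 : (A -> M) -> Prop) (W2 : (A -> N) -> Prop)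
  (B : ((A -> M) -> Prop) -> Prop) (C : ((A -> N) -> Prop) -> Prop)
  (g : ((A -> M) -> Prop) -> ((A -> N) -> Prop)) : Prop :=
  (forall X, B X -> C (g X)) /\
  (forall X Y, B X -> B Y -> g X = g Y -> X = Y) /\
  (forall Y, C Y -> exists X, B X /\ g X = Y) /\
  (forall X Y, B X -> B Y -> g (setI X Y) = setI (g X) (g Y)) /\
  (forall X, B X -> g (setCrel W1 X) = setCrel W2 (g X)) /\
  (forall i j, i <> j -> forall X, B X -> g (Srepl W1 i j X) = Srepl W2 i j (g X)) /\
  (forall i j, i <> j -> forall X, B X -> g (Sswap W1 i j X) = Sswap W2 i j (g X)).

(* The algebra P(V), V = ^A A^(Id), is embedded into the full set algebra
   P(^A A) by an ultrafilter "limit".  Let U be an ultrafilter on the finite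
   lists of indices which is fine: for every list l it contains the set of
   lists G covering l.  For q : A -> A and a finite G let [restrict q G] agree
   with q on G and with the identity off G; it lies in V.  We put

       lift X q  :=  U-almost every G satisfies  X (restrict q G).

   Because U is an ultrafilter, [lift] commutes with intersection and
   complement; because a substitution [i/j] or transposition [i,j] moves only
   i and j, it commutes with restriction to every G containing i and j, so
   [lift] commutes with S^i_j and S_ij.  Moreover [restrict q G = q] for all
   large G when q is in V, so [lift X] meets V exactly in X.  Hence [lift] is
   injective on subsets of V, its image C of B is a subalgebra of P(^A A), and
   with M := A and eps := id it is the required strong sub-base-isomorphism. *)

From Stdlib Require Import List Classical ClassicalDescription
  FunctionalExtensionality PropExtensionality.
From mathcomp Require Import ssreflect.
From mathcomp Require classical_sets filter.

Definition covers {A : Type} (l G : list A) : Prop :=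
  forall a, In a l -> In a G.

Definition fine_ultrafilter {A : Type} (U : (list A -> Prop) -> Prop) : Prop :=
  (forall P Q, U P -> U Q -> U (fun G => P G /\ Q G)) /\
  (forall P Q : list A -> Prop, (forall G, P G -> Q G) -> U P -> U Q) /\
  (forall P, U P \/ U (fun G => ~ P G)) /\
  (forall P, U P -> exists G, P G) /\
  (forall l, U (covers l)).

Module FineUltrafilter.
Import classical_sets filter.

(* The cones [covers l] have the finite intersection property (the union of
   two lists covers both), so the ultrafilter lemma extends them. *)
Lemma exists_fine_ultrafilter (A : Type) :
  exists U : (list A -> Prop) -> Prop, fine_ultrafilter U.
Proof.
pose F0 : set_system (list A) :=
  fun P => exists l, forall G, covers l G -> P G.
have F0_proper : ProperFilter F0.
  split.
  - by move=> [l Hl]; exact: (Hl l (fun a h => h)).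
  - split.
    + by exists nil.
    + move=> P Q [l1 H1] [l2 H2]; exists (l1 ++ l2) => G HG; split.
      * by apply: H1 => a h; apply: HG; apply: in_or_app; left.
      * by apply: H2 => a h; apply: HG; apply: in_or_app; right.
    + by move=> P Q PQ [l Hl]; exists l => G HG; apply: PQ; exact: Hl.
have [U [U_ultra F0U]] := ultraFilterLemma F0_proper.
exists U; split; [|split; [|split; [|split]]].
- by move=> P Q HP HQ; exact: (filterI HP HQ).
- by move=> P Q PQ HP; apply: filterS HP => G; apply: PQ.
- by move=> P; exact: (in_ultra_setVsetC P U_ultra).
- move=> P HP; apply: NNPP => noP.
  by apply: (@filter_not_empty _ U _); apply: filterS HP => G PG; apply: noP; exists G.
- by move=> l; apply: F0U; exists l.
Qed.
End FineUltrafilter.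

Lemma pred_ext {T : Type} (X Y : T -> Prop) : (forall q, X q <-> Y q) -> X = Y.
Proof.
by move=> XY; apply: functional_extensionality => q; apply: propositional_extensionality.
Qed.

Section UltrafilterLimits.
Context {A : Type} {U : (list A -> Prop) -> Prop} (U_fine : fine_ultrafilter U).

Lemma U_and (P Q : list A -> Prop) : U (fun G => P G /\ Q G) <-> U P /\ U Q.
Proof.
have [UI [US _]] := U_fine; split.
- by move=> PQ; split; apply: US PQ => G [].
- by move=> [HP HQ]; exact: UI.
Qed.

Lemma U_not (P : list A -> Prop) : U (fun G => ~ P G) <-> ~ U P.
Proof.
have [_ [_ [UC [Uwit _]]]] := U_fine; split.
- move=> nP HP; have [G [PG nPG]] := Uwit _ (proj2 (U_and _ _) (conj HP nP)).
  exact: nPG.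
- by move=> nP; case: (UC P).
Qed.

Lemma U_const (P : Prop) : U (fun _ => P) <-> P.
Proof.
have [_ [_ [UC [Uwit _]]]] := U_fine; split.
- by move=> HP; have [] := Uwit _ HP.
- by move=> p; case: (UC (fun _ => P)) => // /Uwit [].
Qed.

Lemma U_eventually_iff (l : list A) (P Q : list A -> Prop) :
  (forall G, covers l G -> (P G <-> Q G)) -> (U P <-> U Q).
Proof.
have [_ [US [_ [_ Ucov]]]] := U_fine => PQ.
have mono R S : (forall G, covers l G -> R G -> S G) -> U R -> U S.
  move=> RS HR; apply: US (proj2 (U_and _ _) (conj HR (Ucov l))) => G [RG lG].
  exact: RS.
by split; apply: mono => G lG; rewrite (PQ G lG).
Qed.

End UltrafilterLimits.

Definition restrict {A : Type} (q : A -> A) (G : list A) (k : A) : A :=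
  match excluded_middle_informative (In k G) with
  | left _ => q k
  | right _ => k
  end.

Lemma restrict_fin_supp {A : Type} (q : A -> A) (G : list A) :
  fin_supp (restrict q G).
Proof.
exists G => i; rewrite /restrict.
by case: (excluded_middle_informative _).
Qed.

Lemma restrict_large {A : Type} (q : A -> A) (l G : list A) :
  (forall i, q i <> i -> In i l) -> covers l G -> restrict q G = q.
Proof.
move=> supp lG; apply: functional_extensionality => k; rewrite /restrict.
case: (excluded_middle_informative _) => // kG.
by apply: NNPP => qk; apply: kG; apply: lG; apply: supp => e; apply: qk.
Qed.

Definition local_on {A : Type} (l : list A) (f : A -> A) : Prop :=
  (forall k, ~ In k l -> f k = k) /\ (forall k, In k l -> In (f k) l).

Lemma repl_local {A : Type} (i j : A) : local_on (i :: j :: nil) (repl i j).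
Proof.
rewrite /repl; split=> k.
- move=> kl; case: (excluded_middle_informative _) => // ki.
  by exfalso; apply: kl; left.
- by move=> /= kl; case: (excluded_middle_informative _) => _ /=; intuition.
Qed.

Lemma swap_local {A : Type} (i j : A) : local_on (i :: j :: nil) (swap i j).
Proof.
rewrite /swap; split=> k.
- move=> kl; case: (excluded_middle_informative _) => [ki|_].
    by exfalso; apply: kl; left.
  case: (excluded_middle_informative _) => // kj.
  by exfalso; apply: kl; right; left.
- move=> /= kl; case: (excluded_middle_informative _) => _ /=; first intuition.
  by case: (excluded_middle_informative _) => _ /=; intuition.
Qed.

Lemma restrict_comp {A : Type} (l G : list A) (f q : A -> A) :
  local_on l f -> covers l G ->
  (fun k => restrict q G (f k)) = restrict (fun k => q (f k)) G.
Proof.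
move=> [f_out f_in] lG; apply: functional_extensionality => k; rewrite /restrict.
case: (classic (In k l)) => kl.
- have kG : In k G by apply: lG.
  have fkG : In (f k) G by apply: lG; apply: f_in.
  case: (excluded_middle_informative (In (f k) G)) => // _.
  by case: (excluded_middle_informative (In k G)).
- rewrite (f_out k kl).
  by case: (excluded_middle_informative (In k G)).
Qed.

Definition lift {A : Type} (U : (list A -> Prop) -> Prop)
  (X : (A -> A) -> Prop) (q : A -> A) : Prop :=
  U (fun G => X (restrict q G)).

Section Lift.
Context {A : Type} {U : (list A -> Prop) -> Prop} (U_fine : fine_ultrafilter U).

Lemma lift_on_V (X : (A -> A) -> Prop) (q : A -> A) :
  fin_supp q -> (lift U X q <-> X q).
Proof.
move=> [l supp]; rewrite /lift -(U_const U_fine (X q)).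
apply: (U_eventually_iff U_fine l) => G lG.
by rewrite (restrict_large _ _ _ supp lG).
Qed.

Lemma lift_setI (X Y : (A -> A) -> Prop) :
  lift U (setI X Y) = setI (lift U X) (lift U Y).
Proof. by apply: pred_ext => q; exact: U_and. Qed.

Lemma lift_setCrel (X : (A -> A) -> Prop) :
  lift U (setCrel (@fin_supp A) X) = setCrel (fun _ => True) (lift U X).
Proof.
apply: pred_ext => q; rewrite /lift /setCrel -(U_not U_fine).
have -> : U (fun G => fin_supp (restrict q G) /\ ~ X (restrict q G))
          <-> U (fun G => ~ X (restrict q G)).
  apply: (U_eventually_iff U_fine nil) => G _.
  by split; [case | split; [exact: restrict_fin_supp |]].
by split; [split |case].
Qed.

Lemma lift_comp (l : list A) (f : A -> A) (X : (A -> A) -> Prop) (q : A -> A) :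
  local_on l f ->
  (lift U (fun s => fin_supp s /\ X (fun k => s (f k))) q <->
   lift U X (fun k => q (f k))).
Proof.
move=> f_local; apply: (U_eventually_iff U_fine l) => G lG.
rewrite (restrict_comp _ _ _ q f_local lG).
by split; [case | split; [exact: restrict_fin_supp |]].
Qed.

Lemma lift_Srepl (i j : A) (X : (A -> A) -> Prop) :
  lift U (Srepl (@fin_supp A) i j X) = Srepl (fun _ => True) i j (lift U X).
Proof.
apply: pred_ext => q; rewrite /Srepl (lift_comp _ _ X q (repl_local i j)).
by split; [split | case].
Qed.

Lemma lift_Sswap (i j : A) (X : (A -> A) -> Prop) :
  lift U (Sswap (@fin_supp A) i j X) = Sswap (fun _ => True) i j (lift U X).
Proof.
apply: pred_ext => q; rewrite /Sswap (lift_comp _ _ X q (swap_local i j)).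
by split; [split | case].
Qed.

Lemma lift_inj_on_V (X Y : (A -> A) -> Prop) :
  (forall s, X s -> fin_supp s) -> (forall s, Y s -> fin_supp s) ->
  lift U X = lift U Y -> X = Y.
Proof.
move=> XV YV XY; apply: pred_ext => s; split => h.
- have sV := XV s h.
  by rewrite -(lift_on_V Y _ sV) -XY (lift_on_V X _ sV).
- have sV := YV s h.
  by rewrite -(lift_on_V X _ sV) XY (lift_on_V Y _ sV).
Qed.

End Lift.

Definition lift_image {A : Type} (U : (list A -> Prop) -> Prop)
  (B : ((A -> A) -> Prop) -> Prop) (Y : (A -> A) -> Prop) : Prop :=
  exists X, B X /\ lift U X = Y.

Section LiftOfSubalgebra.
Context {A : Type} {U : (list A -> Prop) -> Prop} (U_fine : fine_ultrafilter U).
Context {B : ((A -> A) -> Prop) -> Prop} (B_sub : subalgebra (@fin_supp A) B).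

Lemma lift_image_subalgebra : subalgebra (fun _ : A -> A => True) (lift_image U B).
Proof.
have [_ [BI [BC [BR BS]]]] := B_sub.
split; [by [] | split; [| split; [| split]]].
- move=> _ _ [X [hX <-]] [Y [hY <-]].
  by exists (setI X Y); split; [apply: BI | exact: lift_setI].
- move=> _ [X [hX <-]].
  by exists (setCrel fin_supp X); split; [apply: BC | exact: lift_setCrel].
- move=> i j ij _ [X [hX <-]].
  by exists (Srepl fin_supp i j X); split; [apply: BR | exact: lift_Srepl].
- move=> i j ij _ [X [hX <-]].
  by exists (Sswap fin_supp i j X); split; [apply: BS | exact: lift_Sswap].
Qed.

Lemma lift_is_iso :
  is_iso (@fin_supp A) (fun _ : A -> A => True) B (lift_image U B) (lift U).
Proof.
have [BV _] := B_sub.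
split; [by move=> X hX; exists X |].
split; [by move=> X Y hX hY; apply: (lift_inj_on_V U_fine); apply: BV |].
split; [by move=> Y [X hXY]; exists X |].
split; [by move=> *; exact: lift_setI |].
split; [by move=> *; exact: lift_setCrel |].
by split=> *; [exact: lift_Srepl | exact: lift_Sswap].
Qed.

End LiftOfSubalgebra.

Theorem theorem4p26 (A : Type) (hA : infinite_type A)
  (B : ((A -> A) -> Prop) -> Prop) (hB : subalgebra (@fin_supp A) B) :
  exists (M : Type) (eps : A -> M),
    (forall x y, eps x = eps y -> x = y) /\
    exists (C : ((A -> M) -> Prop) -> Prop)
           (g : ((A -> A) -> Prop) -> ((A -> M) -> Prop)),
      subalgebra (fun _ : A -> M => True) C /\
      is_iso (@fin_supp A) (fun _ : A -> M => True) B C g /\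
      forall X, B X -> forall q : A -> M,
        ((g X q /\ exists s, fin_supp s /\ q = (fun k => eps (s k))) <->
         (exists s, X s /\ q = (fun k => eps (s k)))).
Proof.
have [U U_fine] := FineUltrafilter.exists_fine_ultrafilter A.
have [BV _] := hB.
exists A, (fun x => x); split; [by [] |].
exists (lift_image U B), (lift U); split; [exact: (lift_image_subalgebra U_fine hB) |].
split; [exact: (lift_is_iso U_fine hB) |].
(* strong sub-base property: on V, lift X is exactly X *)
move=> X hX q; split.
- move=> [Xq [s [sV qs]]]; subst q; exists s; split => //.
  exact: (proj1 (lift_on_V U_fine X s sV) Xq).
- move=> [s [Xs qs]]; subst q; have sV := BV X hX s Xs.
  split; [| by exists s].
  exact: (proj2 (lift_on_V U_fine X s sV) Xs).
Qed.
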